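(* Let $n\ge 5$. Then for every $1\le r\le n$, no subset of $N(W_r)$ of size $n-2$ is a doubly resolving set of $L(n)$.
   Context: For $n\ge 5$, $H(n)$ is the graph with vertex set $V_1\cup V_2$, where $V_1=\{v_1,\dots,v_n\}$ and $V_2=\{v_iv_j: 1\le i<j\le n\}$, and $v_r$ is adjacent to $v_iv_j$ iff $r\in\{i,j\}$ (no other edges). $L(n)$ is the line graph of $H(n)$: its vertices are the edges $\{v_r,v_iv_j\}$ of $H(n)$ (with $r\in\{i,j\}$), two being adjacent iff they share an endpoint. For $1\le r\le n$, $W_r$ is the set of vertices of $L(n)$ of the form $\{v_r,v_iv_j\}$; it is a maximal clique of size $n-1$. $N(W_r)$ denotes the set of vertices of $L(n)$ not in $W_r$ adjacent to some vertex of $W_r$, i.e. $N(W_r)=\{\{v_k,v_iv_j\}: k\neq r,\ \{i,j\}=\{r,k\}\}$. For an ordered set $Q=\{q_1,\dots,q_l\}$ of vertices, $r(x|Q)=(d(x,q_1),\dots,d(x,q_l))$ with $d$ the shortest-path distance; $Q$ is a doubly resolving set of $G$ if for any two distinct vertices $x,y$, $r(x|Q)-r(y|Q)\neq\lambda(1,\dots,1)$ for every integer $\lambda$. *)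

From mathcomp Require Import all_boot all_order all_algebra.
Set Implicit Arguments. Unset Strict Implicit. Unset Printing Implicit Defensive.

(* If y is unreachable the
   value is #|T| (irrelevant here: L(n) is connected). *)
Definition walkb (T : finType) (e : rel T) (k : nat) (x y : T) : bool :=
  [exists p : k.-tuple T, path e x p && (last x p == y)].

Definition gdist (T : finType) (e : rel T) (x y : T) : nat :=
  find (fun k => walkb e k x y) (iota 0 #|T|).

Definition doubly_resolving (T : finType) (e : rel T) (Q : {set T}) : Prop :=
  forall x y : T, x <> y ->
    ~ (exists lam : int,
         forall q, q \in Q -> ((gdist e x q)%:Z - (gdist e y q)%:Z)%R = lam).

(* Vertices of L(n): edges {v_r, v_i v_j} of H(n), encoded as the pair
   (r, {i,j}) with {i,j} a 2-subset of 'I_n containing r.  Indices are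
   0-based: v_1..v_n become 0..n-1. *)
Definition Lvert (n : nat) :=
  {p : 'I_n * {set 'I_n} | (#|p.2| == 2) && (p.1 \in p.2)}.

(* Two edges of H(n) are adjacent in L(n) iff they are distinct and share an
   endpoint: the same vertex v_r of V_1, or the same vertex v_iv_j of V_2. *)
Definition Ladj (n : nat) : rel (Lvert n) :=
  fun x y => (x != y) && (((val x).1 == (val y).1) || ((val x).2 == (val y).2)).

Definition W (n : nat) (r : 'I_n) : {set Lvert n} :=
  [set x | (val x).1 == r].

Definition NW (n : nat) (r : 'I_n) : {set Lvert n} :=
  [set x | (x \notin W r) && [exists y in W r, Ladj x y]].

From mathcomp Require Import all_boot all_order all_algebra.
From mathcomp Require Import zify.

Set Implicit Arguments.
Unset Strict Implicit.
Unset Printing Implicit Defensive.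

(* Every vertex of N(W_r) is an edge {v_k, v_k v_r} with k <> r, and Q uses
   only n - 2 of the n - 1 indices k <> r, so some m <> r is missed.  Put
   x = {v_r, v_r v_m} and y = {v_m, v_r v_m}.  For q = {v_k, v_k v_r} in Q we
   have d(x, q) = 2 (through {v_r, v_r v_k}) while d(y, q) = 3: of two vertices
   of L(n) at distance at most 2, the V_1 endpoint of one lies in the V_2 pair
   of the other, which fails for y and q.  Hence r(x|Q) - r(y|Q) = -(1,...,1). *)

Section Walks.

Variables (T : finType) (e : rel T).

Lemma walkb0 (x y : T) : walkb e 0 x y = (x == y).
Proof.
apply/existsP/idP => [[p]|xy]; first by rewrite (tuple0 p).
by exists [tuple]; rewrite /= xy.
Qed.

Lemma walkbS k (x y : T) :
  walkb e k.+1 x y = [exists z, e x z && walkb e k z y].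
Proof.
apply/existsP/existsP => [[[[|z p] //= sz_p]]|[z /andP[exz /existsP[p]]]].
  case/andP=> /andP[exz pp] lp; exists z; rewrite exz.
  by apply/existsP; exists (Tuple (sz_p : size p == k)); rewrite /= pp.
by case/andP=> pp lp; exists [tuple of z :: p]; rewrite /= exz pp.
Qed.

Lemma walkb_path (x : T) (p : seq T) :
  path e x p -> walkb e (size p) x (last x p).
Proof. by move=> pp; apply/existsP; exists (in_tuple p); rewrite /= pp eqxx. Qed.

Lemma walkb_lt_card k (x y : T) :
  walkb e k x y -> exists2 j, j < #|T| & walkb e j x y.
Proof.
case/existsP=> p /andP[pp /eqP <-]; case: (shortenP pp) => p' pp' up' _.
exists (size p'); last exact: walkb_path.
by move: (max_card (mem (x :: p'))); rewrite (card_uniqP up').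
Qed.

Lemma gdist_min k (x y : T) : walkb e k x y ->
  (forall j, j < k -> ~~ walkb e j x y) -> gdist e x y = k.
Proof.
move=> wk kmin; have [j jT wj] := walkb_lt_card wk.
have kT : k < #|T| by apply: leq_ltn_trans jT; rewrite leqNgt (contraTN (kmin j)).
have no_walk_lt_k : ~~ has (fun j => walkb e j x y) (iota 0 k).
  by apply/hasPn => i; rewrite mem_iota => /andP[_ /kmin].
rewrite /gdist -(subnKC (ltnW kT)) iotaD find_cat (negbTE no_walk_lt_k).
by rewrite size_iota -(subnSK kT) /= wk addn0.
Qed.

Section ReflexiveCover.

Variables (s : rel T) (s_refl : reflexive s) (e_s : subrel e s).

Lemma walkb_lt2 j (x y : T) : j < 2 -> walkb e j x y -> s x y.
Proof.
case: j => [|[|//]] _; first by rewrite walkb0 => /eqP <-.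
by rewrite walkbS => /existsP[z /andP[/e_s xz]]; rewrite walkb0 => /eqP <-.
Qed.

Lemma walkb_lt3 j (x y : T) : j < 3 -> walkb e j x y ->
  exists z, s x z && s z y.
Proof.
case: j => [|j] j_lt3; first by rewrite walkb0 => /eqP <-; exists x; rewrite s_refl.
rewrite walkbS => /existsP[z /andP[/e_s xz zy]].
by exists z; rewrite xz (walkb_lt2 j_lt3 zy).
Qed.

End ReflexiveCover.

End Walks.

Lemma exists_notin_imset (aT rT : finType) (f : aT -> rT)
    (A : {set aT}) (B : {set rT}) :
  #|A| < #|B| -> exists2 b, b \in B & b \notin f @: A.
Proof.
move=> AB; have : ~~ (B \subset f @: A).
  apply: contraTN AB => /subset_leq_card Bf; rewrite -leqNgt.
  exact: leq_trans Bf (leq_imset_card f A).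
by case/subsetPn=> b; exists b.
Qed.

Section LineGraph.

Variable n : nat.

Definition Lshare : rel (Lvert n) :=
  fun a b => ((val a).1 == (val b).1) || ((val a).2 == (val b).2).

Lemma Lshare_refl : reflexive Lshare.
Proof. by move=> a; rewrite /Lshare eqxx. Qed.

Lemma Ladj_Lshare : subrel (@Ladj n) Lshare.
Proof. by move=> a b /andP[]. Qed.

Lemma Lvert_mem (a : Lvert n) : (val a).1 \in (val a).2.
Proof. by case/andP: (valP a). Qed.

Lemma Lvert_card (a : Lvert n) : #|(val a).2| = 2.
Proof. by case/andP: (valP a) => /eqP. Qed.

Lemma Lshare2 (a w b : Lvert n) : Lshare a w -> Lshare w b ->
  ((val a).1 \in (val b).2) || ((val b).1 \in (val a).2).
Proof.
case/orP=> /eqP aw /orP[] /eqP wb.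
- by rewrite aw wb Lvert_mem.
- by rewrite aw -wb Lvert_mem.
- by rewrite aw -wb Lvert_mem orbT.
- by rewrite -wb -aw Lvert_mem.
Qed.

Lemma Lpt_subproof (i j : 'I_n) :
  i != j -> (#|[set i; j]| == 2) && (i \in [set i; j]).
Proof. by move=> ij; rewrite cards2 ij set21. Qed.

Definition Lpt (i j : 'I_n) (ij : i != j) : Lvert n :=
  exist _ (i, [set i; j]) (Lpt_subproof ij).

Lemma Ladj_Lpt_swap (i j : 'I_n) (ij : i != j) (ji : j != i) :
  Ladj (Lpt ij) (Lpt ji).
Proof.
rewrite /Ladj /= setUC eqxx orbT andbT.
by apply/eqP => /(congr1 (fun a => (val a).1)) /= ij_eq; rewrite ij_eq eqxx in ij.
Qed.

Lemma Ladj_Lpt_pivot (i j k : 'I_n) (ij : i != j) (ik : i != k) :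
  j != k -> Ladj (Lpt ij) (Lpt ik).
Proof.
move=> jk; rewrite /Ladj /= eqxx orTb andbT.
apply: contra_neq jk => /(congr1 (fun a : Lvert n => j \in (val a).2)) /=.
by rewrite !inE eqxx orbT eq_sym (negbTE ij) => /esym /eqP.
Qed.

Section Distances.

Variables (r m k : 'I_n) (rm : r != m) (kr : k != r) (km : k != m).

Lemma gdist_Lpt_two : gdist (@Ladj n) (Lpt rm) (Lpt kr) = 2.
Proof.
have rk : r != k by rewrite eq_sym.
apply: gdist_min => [|j j_lt2].
  apply: (walkb_path (p := [:: Lpt rk; Lpt kr])).
  by rewrite /= Ladj_Lpt_pivot 1?eq_sym // Ladj_Lpt_swap.
apply/negP => /(walkb_lt2 Lshare_refl Ladj_Lshare j_lt2) /orP[] /eqP /= xq.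
  by rewrite xq eqxx in rk.
by move: (set22 r m); rewrite xq !inE !(eq_sym m) (negbTE km) (negbTE rm).
Qed.

Lemma gdist_Lpt_three (mr : m != r) :
  gdist (@Ladj n) (Lpt mr) (Lpt kr) = 3.
Proof.
have rk : r != k by rewrite eq_sym.
apply: gdist_min => [|j j_lt3].
  apply: (walkb_path (p := [:: Lpt rm; Lpt rk; Lpt kr])).
  by rewrite /= !Ladj_Lpt_swap Ladj_Lpt_pivot 1?eq_sym.
apply/negP => /(walkb_lt3 Lshare_refl Ladj_Lshare j_lt3) [w /andP[/Lshare2 yw /yw]].
by rewrite !inE !(eq_sym m) (negbTE km) (negbTE kr) (negbTE rm).
Qed.

End Distances.

Lemma NW_Lpt (r : 'I_n) (q : Lvert n) :
  q \in NW r -> exists qr : (val q).1 != r, q = Lpt qr.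
Proof.
rewrite !inE => /andP[qr /existsP[w /andP[]]]; rewrite inE => /eqP wr.
case/andP=> _ /orP[/eqP qw | /eqP qw]; first by rewrite qw wr eqxx in qr.
have r_q : r \in (val q).2 by rewrite qw -wr Lvert_mem.
exists qr; apply: val_inj => /=.
have -> : [set (val q).1; r] = (val q).2.
  apply/eqP; rewrite eqEcard Lvert_card cards2 qr andbT.
  by apply/subsetP=> i; rewrite !inE => /orP[] /eqP ->; rewrite ?Lvert_mem.
exact: surjective_pairing.
Qed.

End LineGraph.

Theorem lemma3p4 (n : nat) (hn : 5 <= n) (r : 'I_n) (Q : {set Lvert n}) :
  Q \subset NW r -> #|Q| = n - 2 -> ~ doubly_resolving (@Ladj n) Q.
Proof.
move=> QN cardQ dres.
have [m] : exists2 m : 'I_n, m \in [set~ r] & m \notin (fun q : Lvert n => (val q).1) @: Q.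
  by apply: exists_notin_imset; rewrite cardQ cardsC1 card_ord; lia.
rewrite in_setC1 => mr mQ; have rm : r != m by rewrite eq_sym.
apply: (dres (Lpt rm) (Lpt mr)).
  by move/(congr1 (fun a => (val a).1)) => /= /eqP; rewrite (negbTE rm).
exists (-1)%R => q qQ.
have qm : (val q).1 != m by apply: contraNneq mQ => <-; apply: imset_f.
have [qr ->] := NW_Lpt (subsetP QN q qQ).
by rewrite gdist_Lpt_two // gdist_Lpt_three.
Qed.
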